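(* Let $l,N\in\mathbb N$ and, for $1\le j\le l$, let $A^j$ and $B^j$ be real $N\times N$ matrices such that each $A^j$ is symmetric with eigenvalues $\{\lambda^j_k\}_{k=1}^N$ and all entries of each $B^j$ are nonnegative. Then $$\sum_{i_1,\dots,i_{2l}=1}^N\prod_{j=1}^l\big(|A^j_{i_{2j-1},i_{2j}}|\,B^j_{i_{2j},i_{2j+1}}\big)\le\prod_{j=1}^l\Big(\|B^j\|\sum_k|\lambda^j_k|\Big),$$ where $i_{2l+1}=i_1$ and $\|\cdot\|$ denotes the operator norm. *)

From HB Require Import structures.
From mathcomp Require Import all_boot all_order all_algebra.
From mathcomp Require Import classical_sets reals.
Set Implicit Arguments. Unset Strict Implicit. Unset Printing Implicit Defensive.
Import Order.TTheory GRing.Theory Num.Theory.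
Local Open Scope ring_scope.
Local Open Scope classical_set_scope.

Definition norm2 {R : realType} {N : nat} (x : 'cV[R]_N) : R :=
  Num.sqrt (\sum_(i < N) x i 0 ^+ 2).

Definition opnorm {R : realType} {N : nat} (B : 'M[R]_N) : R :=
  sup [set norm2 (B *m x) | x in [set x : 'cV[R]_N | norm2 x <= 1]].

From HB Require Import structures.
From mathcomp Require Import all_boot all_order all_algebra.
From mathcomp Require Import classical_sets reals.
From mathcomp Require Import ring lra complex sesquilinear spectral.
Import Order.TTheory GRing.Theory Num.Theory.
Local Open Scope ring_scope.

(** The spectral theorem writes the symmetric matrix A as a sum of rank-one
    terms, so that |A_ab| <= sum_k |lambda_k| w_k(a) w_k(b) with nonnegative
    unit vectors w_k.  Expanding the product over j, the cyclic sum becomes a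
    nonnegative combination, with weights prod_j |lambda^j_(k_j)|, of cyclic
    sums of rank-one type.  Regrouping the indices as the pairs
    (i_(2j), i_(2j+1)) factors such a sum into the product over j of the
    bilinear forms w^T B^j w', each of which is at most ||B^j||. *)

Set Implicit Arguments. Unset Strict Implicit. Unset Printing Implicit Defensive.

Section CauchySchwarz.
Variables (R : rcfType) (N : nat).
Implicit Types y z : 'I_N -> R.

Lemma sum_mul_le_sqrt y z :
  \sum_i y i ^+ 2 <= 1 -> \sum_i y i * z i <= Num.sqrt (\sum_i z i ^+ 2).
Proof.
move=> y_le1; set S := \sum_i z i ^+ 2; set t := Num.sqrt S.
have S_ge0 : 0 <= S by apply: sumr_ge0 => i _; exact: sqr_ge0.
have t2 : t ^+ 2 = S by rewrite sqr_sqrtr.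
have [t0|t_neq0] := eqVneq t 0.
  have z0 i : z i = 0.
    apply/eqP; rewrite -sqrf_eq0; apply/eqP.
    move: t2; rewrite t0 expr0n => /esym/eqP.
    rewrite psumr_eq0 => [/allP/(_ i (mem_index_enum i))/eqP //|j _].
    exact: sqr_ge0.
  by rewrite big1 ?t0 // => i _; rewrite z0 mulr0.
have t_gt0 : 0 < t by rewrite lt_def t_neq0 sqrtr_ge0.
(* Summing [2 t y z <= t^2 y^2 + z^2] over i. *)
have amgm : 2 * t * (\sum_i y i * z i) <= t ^+ 2 * (\sum_i y i ^+ 2) + S.
  rewrite /S !mulr_sumr -big_split /=; apply: ler_sum => i _.
  have := sqr_ge0 (t * y i - z i).
  have -> : (t * y i - z i) ^+ 2
          = t ^+ 2 * y i ^+ 2 + z i ^+ 2 - 2 * t * (y i * z i) by ring.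
  by rewrite subr_ge0.
have : t ^+ 2 * (\sum_i y i ^+ 2) <= t ^+ 2 by rewrite ler_piMr // sqr_ge0.
by rewrite -(ler_pM2l t_gt0); nra.
Qed.

Lemma sqr_sum_mul_le y z :
  \sum_i y i ^+ 2 <= 1 -> (\sum_i y i * z i) ^+ 2 <= \sum_i z i ^+ 2.
Proof.
move=> y_le1; have Ny_le1 : \sum_i (- y i) ^+ 2 <= 1.
  by under eq_bigr do rewrite sqrrN.
have := sum_mul_le_sqrt z y_le1; have := sum_mul_le_sqrt z Ny_le1.
under eq_bigr do rewrite mulNr; rewrite sumrN.
have S_ge0 : 0 <= \sum_i z i ^+ 2 by apply: sumr_ge0 => i _; exact: sqr_ge0.
rewrite -(@ler_sqrt _ _ _ S_ge0) sqrtr_sqr => Nle le.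
by rewrite ler_norml lerNl Nle le.
Qed.

End CauchySchwarz.

Section OperatorNorm.
Variables (R : realType) (N : nat).
Implicit Types (x : 'cV[R]_N) (B : 'M[R]_N).

Lemma norm2_le1E x : (norm2 x <= 1) = (\sum_i x i 0 ^+ 2 <= 1).
Proof. by rewrite /norm2 -{1}sqrtr1 ler_sqrt. Qed.

Lemma norm2_mulmx_le_frobenius B x :
  norm2 x <= 1 -> norm2 (B *m x) <= Num.sqrt (\sum_b \sum_a B b a ^+ 2).
Proof.
rewrite norm2_le1E => x_le1; rewrite /norm2 ler_sqrt; last first.
  by apply: sumr_ge0 => b _; apply: sumr_ge0 => a _; exact: sqr_ge0.
apply: ler_sum => b _; rewrite mxE.
under eq_bigr do rewrite mulrC.
exact: sqr_sum_mul_le.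
Qed.

Lemma norm2_mulmx_le_opnorm B x : norm2 x <= 1 -> norm2 (B *m x) <= opnorm B.
Proof.
move=> x_le1; apply: sup_upper_bound; last by exists x.
split; first by exists (norm2 (B *m x)); exists x.
by exists (Num.sqrt (\sum_b \sum_a B b a ^+ 2)) => _ [y y_le1 <-];
  exact: norm2_mulmx_le_frobenius.
Qed.

Lemma bilinear_le_opnorm B (u v : 'I_N -> R) :
  \sum_i u i ^+ 2 <= 1 -> \sum_i v i ^+ 2 <= 1 ->
  \sum_(x : 'I_N * 'I_N) u x.1 * B x.1 x.2 * v x.2 <= opnorm B.
Proof.
move=> u_le1 v_le1; pose vc : 'cV[R]_N := \col_a v a.
have vc_le1 : norm2 vc <= 1.
  by rewrite norm2_le1E; under eq_bigr do rewrite mxE.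
apply: le_trans (norm2_mulmx_le_opnorm B vc_le1).
rewrite -(pair_bigA _ (fun b a => u b * B b a * v a)) /=.
have -> : \sum_b \sum_a u b * B b a * v a = \sum_b u b * (B *m vc) b 0.
  apply: eq_bigr => b _; rewrite mxE mulr_sumr.
  by apply: eq_bigr => a _; rewrite mxE mulrA.
exact: sum_mul_le_sqrt.
Qed.

End OperatorNorm.

Section CyclicSums.
Variables (R : realType) (l N : nat) (B : 'I_l -> 'M[R]_N).
Hypothesis B_ge0 : forall j a b, 0 <= B j a b.

Lemma cyclic_sum_rank_one_le (w : 'I_l -> 'I_N -> R) :
  (forall j a, 0 <= w j a) -> (forall j, \sum_a w j a ^+ 2 <= 1) ->
  \sum_(p : {ffun 'I_l -> 'I_N * 'I_N})
     \prod_(j < l) (w j (p j).1 * w j (p j).2 * B j (p j).2 (p (ordS j)).1)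
  <= \prod_(j < l) opnorm (B j).
Proof.
move=> w_ge0 w_le1.
pose h j (x : 'I_N * 'I_N) := w j x.1 * B j x.1 x.2 * w (ordS j) x.2.
(* Regroup (i_(2j-1), i_(2j)) into (i_(2j), i_(2j+1)). *)
pose phi (p : {ffun 'I_l -> 'I_N * 'I_N}) : {ffun 'I_l -> 'I_N * 'I_N} :=
  [ffun j => ((p j).2, (p (ordS j)).1)].
pose psi (q : {ffun 'I_l -> 'I_N * 'I_N}) : {ffun 'I_l -> 'I_N * 'I_N} :=
  [ffun j => ((q (ord_pred j)).2, (q j).1)].
have phiK : cancel phi psi.
  by move=> p; apply/ffunP => j; rewrite !ffunE /= ord_predK; case: (p j).
have psiK : cancel psi phi.
  by move=> q; apply/ffunP => j; rewrite !ffunE /= ordSK; case: (q j).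
have regroup (p : {ffun 'I_l -> 'I_N * 'I_N}) :
    \prod_(j < l) (w j (p j).1 * w j (p j).2 * B j (p j).2 (p (ordS j)).1)
  = \prod_(j < l) h j (phi p j).
  under [RHS]eq_bigr do rewrite ffunE /=.
  rewrite [RHS]big_split /=.
  under eq_bigr do rewrite -mulrA.
  rewrite big_split /= mulrC; congr (_ * _).
  by rewrite (reindex_inj (@ordS_inj l)).
under eq_bigr do rewrite regroup.
rewrite -(reindex phi (P := xpredT) (F := fun q => \prod_(j < l) h j (q j)));
  last by exists psi => ? _.
rewrite -(bigA_distr_bigA h) /=.
apply: ler_prod => j _; apply/andP; split.
  by apply: sumr_ge0 => x _; rewrite /h !mulr_ge0.
exact: bilinear_le_opnorm.
Qed.

Lemma cyclic_sum_le_of_majorant (A : 'I_l -> 'M[R]_N)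
    (c : 'I_l -> 'I_N -> R) (w : 'I_l -> 'I_N -> 'I_N -> R) :
  (forall j k, 0 <= c j k) -> (forall j k a, 0 <= w j k a) ->
  (forall j k, \sum_a w j k a ^+ 2 <= 1) ->
  (forall j a b, `|A j a b| <= \sum_k c j k * w j k a * w j k b) ->
  \sum_(p : {ffun 'I_l -> 'I_N * 'I_N})
     \prod_(j < l) (`|A j (p j).1 (p j).2| * B j (p j).2 (p (ordS j)).1)
  <= \prod_(j < l) (opnorm (B j) * \sum_(k < N) c j k).
Proof.
move=> c_ge0 w_ge0 w_le1 A_le.
apply: (@le_trans _ _ (\sum_(p : {ffun 'I_l -> 'I_N * 'I_N})
     \prod_(j < l) \sum_k (c j k * w j k (p j).1 * w j k (p j).2 *
          B j (p j).2 (p (ordS j)).1))).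
  apply: ler_sum => p _; apply: ler_prod => j _.
  by rewrite mulr_ge0 //= -mulr_suml ler_wpM2r.
under eq_bigr do rewrite bigA_distr_bigA /=.
rewrite exchange_big big_split /= (bigA_distr_bigA c) mulr_sumr.
apply: ler_sum => kap _.
under eq_bigr => p _.
  rewrite (eq_bigr (fun j => c j (kap j) * (w j (kap j) (p j).1 *
     w j (kap j) (p j).2 * B j (p j).2 (p (ordS j)).1))); last first.
    by move=> j _; rewrite !mulrA.
  rewrite big_split /=.
over.
rewrite -mulr_sumr mulrC ler_wpM2r ?prodr_ge0 //.
exact: (cyclic_sum_rank_one_le (w := fun j => w j (kap j))).
Qed.

End CyclicSums.

Lemma char_poly_similar (R : comUnitRingType) n (P D : 'M[R]_n) :
  P \in unitmx -> char_poly (invmx P *m D *m P) = char_poly D.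
Proof.
move=> P_unit; rewrite /char_poly /char_poly_mx.
have PVP : map_mx polyC (invmx P) *m map_mx polyC P = 1%:M.
  by rewrite -map_mxM mulVmx // map_mx1.
have PPV : map_mx polyC P *m map_mx polyC (invmx P) = 1%:M.
  by rewrite -map_mxM mulmxV // map_mx1.
have -> : ('X%:M - map_mx polyC (invmx P *m D *m P) : 'M[{poly R}]_n) =
   map_mx polyC (invmx P) *m ('X%:M - map_mx polyC D) *m map_mx polyC P.
  rewrite mulmxBr mulmxBl !map_mxM; congr (_ - _).
  by rewrite scalar_mxC -mulmxA PVP mulmx1.
by rewrite !det_mulmx mulrC mulrA -det_mulmx PPV det1 mul1r.
Qed.

Section SymmetricSpectral.
Local Open Scope sesquilinear_scope.
Variables (R : rcfType) (N : nat) (A : 'M[R]_N) (lam : 'I_N -> R).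
Hypothesis A_sym : A^T = A.
Hypothesis A_char : char_poly A = \prod_(k < N) ('X - (lam k)%:P).

Local Notation RC := (real_complex R).
Local Notation normc := (@Normc.normc R).

Lemma normcE (z : R[i]) : RC (normc z) = `|z|.
Proof. by case: z. Qed.

Lemma normc_ge0 (z : R[i]) : 0 <= normc z.
Proof. by rewrite -ler0c normcE. Qed.

Lemma norm_real_complex (x : R) : `|RC x| = RC `|x|.
Proof. by rewrite -normcE /= expr0n addr0 sqrtr_sqr. Qed.

Let Ac := map_mx RC A.
Let P := spectralmx Ac.
Let d := spectral_diag Ac.

Lemma spectral_row_normc_sqr k : \sum_a normc (P k a) ^+ 2 = 1.
Proof.
have /matrixP/(_ k k) := unitarymxP (spectral_unitarymx Ac).
rewrite !mxE eqxx /= => row_unit.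
suff : RC (\sum_a normc (P k a) ^+ 2) = 1 by move=> /complexI.
rewrite rmorph_sum; apply: etrans row_unit; apply: eq_bigr => a _.
by rewrite rmorphXn /= normcE normCK !mxE.
Qed.

Let Ac_spectral : Ac = invmx P *m diag_mx d *m P.
Proof.
apply/orthomx_spectralP/normalmxP.
suff -> : Ac ^t* = Ac by [].
apply/matrixP => i j; rewrite !mxE conj_Creal; last by apply/complex_realP; eexists.
by rewrite -[in RHS]A_sym mxE.
Qed.

Lemma abs_entry_le_spectral a b :
  `|A a b| <= \sum_k normc (d 0 k) * normc (P k a) * normc (P k b).
Proof.
have Aab : RC (A a b) = \sum_k (P k a)^* * d 0 k * P k b.
  have /matrixP/(_ a b) := Ac_spectral.
  rewrite mxE => ->; rewrite invmx_unitary ?spectral_unitarymx // mul_mx_diag.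
  by rewrite mxE; apply: eq_bigr => k _; rewrite !mxE.
rewrite -lecR -norm_real_complex Aab rmorph_sum /=.
apply: le_trans (ler_norm_sum _ _ _) _; apply: ler_sum => k _.
by rewrite !rmorphM /= !normcE !normrM norm_conjC (mulrC `|P k a|).
Qed.

Lemma sum_normc_spectral_diag : \sum_k normc (d 0 k) = \sum_k `|lam k|.
Proof.
have charAc : char_poly Ac = \prod_(k < N) ('X - (RC (lam k))%:P).
  rewrite -map_char_poly A_char rmorph_prod; apply: eq_bigr => k _.
  exact: map_polyXsubC.
have chard : char_poly Ac = \prod_(k < N) ('X - (d 0 k)%:P).
  rewrite [in LHS]Ac_spectral char_poly_similar ?spectral_unit //.
  rewrite char_poly_trig ?diag_mx_is_trig //.
  by apply: eq_bigr => k _; rewrite mxE eqxx mulr1n.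
have eig : perm_eq [seq d 0 k | k <- index_enum 'I_N]
                   [seq RC (lam k) | k <- index_enum 'I_N].
  by apply: prod_XsubC_eq; rewrite !big_map -charAc -chard.
apply: complexI; rewrite !rmorph_sum /=.
under eq_bigr do rewrite normcE.
under [RHS]eq_bigr do rewrite -norm_real_complex.
rewrite -(big_map (d 0) xpredT Num.norm) -(big_map (RC \o lam) xpredT Num.norm).
exact: perm_big.
Qed.

End SymmetricSpectral.

Unset Implicit Arguments.

Theorem lemma10 (R : realType) (l N : nat)
    (A B : 'I_l -> 'M[R]_N) (lam : 'I_l -> 'I_N -> R)
    (hAsym : forall j, (A j)^T = A j)
    (hAeig : forall j, char_poly (A j) = \prod_(k < N) ('X - (lam j k)%:P))
    (hBnn : forall j a b, 0 <= B j a b) :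
  \sum_(p : {ffun 'I_l -> 'I_N * 'I_N})
     \prod_(j < l) (`|A j (p j).1 (p j).2| * B j (p j).2 (p (ordS j)).1)
  <= \prod_(j < l) (opnorm (B j) * \sum_(k < N) `|lam j k|).
Proof.
pose Ac j := map_mx (real_complex R) (A j).
pose c j k := Normc.normc (spectral_diag (Ac j) 0 k).
pose w j k a := Normc.normc (spectralmx (Ac j) k a).
have -> : \prod_(j < l) (opnorm (B j) * \sum_(k < N) `|lam j k|)
        = \prod_(j < l) (opnorm (B j) * \sum_(k < N) c j k).
  by apply: eq_bigr => j _; rewrite (sum_normc_spectral_diag (hAsym j) (hAeig j)).
apply: (cyclic_sum_le_of_majorant hBnn (c := c) (w := w)) => [j k|j k a|j k|j a b].
- exact: normc_ge0.
- exact: normc_ge0.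
- by rewrite spectral_row_normc_sqr.
- exact: (abs_entry_le_spectral (hAsym j) a b).
Qed.
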